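(* For every permutation $w$ of $\{1,\ldots,n\}$, $$\mathrm{wt}(w)=\prod_{(\alpha,\beta)}\frac{N(\alpha,\beta)}{D(\alpha,\beta)},$$ where the product runs over all ordered pairs of node labels $(\alpha,\beta)$ of the tree $T(w^{-1})$ such that $\alpha$ lies in the left subtree of the node $\beta$.
   Context: Work in $\mathbb{Q}(x_1,x_2,\ldots)$ with the field endomorphism $F$ given by $F(x_i)=x_{i+1}$. Define $[n]:=x_1+\cdots+x_n$, $[0]!:=1$, $[n]!:=[n]\cdot F([n-1]!)=\prod_{j=0}^{n-1}F^j[n-j]$. For a $k$-element set $S=\{i_1>\cdots>i_k\}$ of positive integers, $\mathrm{wt}(S):=\frac{\prod_{j=1}^k F^{i_j-1}[j]}{[k]!}$ ($\mathrm{wt}(\emptyset)=1$). For a permutation $w=(w_1,\ldots,w_n)$ in one-line notation, $\mathrm{wt}(w)$ is defined recursively: the empty permutation has weight $1$; otherwise let $k:=w_1-1$, $S(w):=\{i:w_i\le k\}$, $a$ the permutation of $\{1,\ldots,k\}$ listing the values $w_i\le k$ in order of increasing $i$, and $\hat b$ the permutation of $\{1,\ldots,n-k-1\}$ listing the values $w_i-k-1$ for $w_i>k+1$ in order of increasing $i$; then $\mathrm{wt}(w):=\mathrm{wt}(S(w))\,\mathrm{wt}(a)\,F^{k+1}(\mathrm{wt}(\hat b))$. For a word $v=v_1\cdots v_m$ with distinct letters, its increasing binary tree $T(v)$ is defined recursively: empty if $m=0$; otherwise, if $v_j$ is the smallest letter, $T(v)$ has root labelled $v_j$, left subtree $T(v_1\cdots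 v_{j-1})$ and right subtree $T(v_{j+1}\cdots v_m)$. Here $w^{-1}$ is the word $w^{-1}(1)w^{-1}(2)\cdots w^{-1}(n)$. For node labels $\alpha,\beta$ of $T(w^{-1})$ with $\alpha$ in the left subtree of $\beta$, let $\ell=\ell(\alpha,\beta)$ be the number of nodes in the left subtree of $\beta$ with label $\geq\alpha$, and $r=r(\alpha,\beta)$ the number of nodes in the right subtree of $\beta$ with label $<\alpha$. Define $D(\alpha,\beta):=x_{w(\beta)-1}+x_{w(\beta)-2}+\cdots+x_{w(\beta)-\ell}=F^{w(\beta)-\ell-1}[\ell]$ and $N(\alpha,\beta):=F^{r+1}(D(\alpha,\beta))=F^{w(\beta)+r-\ell}[\ell]$. *)

From HB Require Import structures.
From mathcomp Require Import all_boot all_order all_algebra all_fingroup.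
From mathcomp Require Import mpoly.

Set Implicit Arguments.
Unset Strict Implicit.
Unset Printing Implicit Defensive.

Import Order.TTheory GRing.Theory Num.Theory.
Local Open Scope ring_scope.

(* The ambient field.  The paper works in Q(x_1,x_2,...) with the field       *)
(* endomorphism F : x_i |-> x_{i+1}.  We work in an arbitrary field K with a  *)
(* family x : nat -> K that is algebraically independent over Q and a field   *)
(* endomorphism F of K with F (x i) = x (i+1).  Convention: x k stands for    *)
(* the paper's x_{k+1} (so x 0 = x_1).  The subfield Q(x 0, x 1, ...) of K,   *)
(* with F restricted to it, is then a copy of (Q(x_1,x_2,...), F).            *)

Definition alg_indep (K : fieldType) (x : nat -> K) : Prop :=
  forall (m : nat) (p : {mpoly rat[m]}),
    p != 0 -> (map_mpoly (@ratr K) p).@[fun i : 'I_m => x (nat_of_ord i)] != 0.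

Section Weights.
Variables (K : fieldType) (x : nat -> K) (F : {rmorphism K -> K}).

(* the paper's x_i, for i >= 1 *)
Definition xp (i : nat) : K := x i.-1.

Definition Fp (k : nat) (a : K) : K := iter k F a.

Definition brk (n : nat) : K := \sum_(1 <= i < n.+1) xp i.

Definition brk_fact (n : nat) : K := \prod_(j < n) Fp j (brk (n - j)).

(* wt(S) for S = {i_1 > ... > i_k} given as the decreasing list s *)
Definition wt_set (s : seq nat) : K :=
  (\prod_(j < size s) Fp ((nth 0%N s j).-1) (brk j.+1)) / brk_fact (size s).

(* wt of a permutation given in one-line notation as a list of values
   (values in {1..n}); recursion with fuel = size *)
Fixpoint wt_rec (fuel : nat) (w : seq nat) : K :=
  match fuel with
  | 0 => 1
  | fuel'.+1 =>
    match w with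
    | [::] => 1
    | w1 :: _ =>
      let k := w1.-1 in
      (* S(w) = {i : w_i <= k}, positions 1-based, listed decreasingly *)
      let S := rev [seq i.+1 | i <- iota 0 (size w) & (nth 0%N w i <= k)%N] in
      let a := [seq v <- w | (v <= k)%N] in
      let bh := [seq (v - k.+1)%N | v <- w & (k.+1 < v)%N] in
      wt_set S * wt_rec fuel' a * Fp k.+1 (wt_rec fuel' bh)
    end
  end.

Definition wt_word (w : seq nat) : K := wt_rec (size w) w.

End Weights.

Definition oneline (n : nat) (w : 'S_n) : seq nat :=
  [seq (w i).+1 | i <- enum 'I_n].

Definition oneline_inv (n : nat) (w : 'S_n) : seq nat := oneline w^-1.

Definition wt_perm (K : fieldType) (x : nat -> K) (F : {rmorphism K -> K})
  (n : nat) (w : 'S_n) : K := wt_word x F (oneline w).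

Inductive btree : Type :=
| Leaf : btree
| Node : nat -> btree -> btree -> btree.

Fixpoint labels (t : btree) : seq nat :=
  match t with
  | Leaf => [::]
  | Node b l r => labels l ++ b :: labels r
  end.

Fixpoint ibt_rec (fuel : nat) (v : seq nat) : btree :=
  match fuel with
  | 0 => Leaf
  | fuel'.+1 =>
    match v with
    | [::] => Leaf
    | v1 :: _ =>
      let m := foldr minn v1 v in
      let j := index m v in
      Node m (ibt_rec fuel' (take j v)) (ibt_rec fuel' (drop j.+1 v))
    end
  end.

Definition ibt (v : seq nat) : btree := ibt_rec (size v) v.

Section TreeProduct.
Variables (K : fieldType) (x : nat -> K) (F : {rmorphism K -> K}).
Variables (n : nat) (w : 'S_n).

Definition wval (beta : nat) : nat := nth 0%N (oneline w) beta.-1.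

Definition Dab (alpha beta : nat) (L : btree) : K :=
  let l := count (fun c => (alpha <= c)%N) (labels L) in
  \sum_(1 <= i < l.+1) xp x (wval beta - i)%N.

Definition Nab (alpha beta : nat) (L R : btree) : K :=
  let r := count (fun c => (c < alpha)%N) (labels R) in
  Fp F r.+1 (Dab alpha beta L).

Fixpoint tree_prod (t : btree) : K :=
  match t with
  | Leaf => 1
  | Node beta L R =>
      (\prod_(alpha <- labels L) (Nab alpha beta L R / Dab alpha beta L))
      * tree_prod L * tree_prod R
  end.

End TreeProduct.

(* If w_1 = k+1 then the letter 1 sits at position k+1 of w^{-1},
   so T(w^{-1}) has root 1, its left subtree is the increasing tree of the positions
   S(w) of the values 1..k (in the order of w^{-1}), and its right subtree that of the
   positions of the values k+2..n.  Replacing a position by its rank among these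
   positions is order preserving and does not change a tree product, so by induction
   the two subtrees contribute wt(a) and, after the shift of values by k+1,
   F^{k+1}(wt(\hat b)).  At the root, the j-th largest element alpha of S(w) has
   l(alpha,1) = j and r(alpha,1) = alpha - 1 - (k - j) - 1, whence
   D(alpha,1) = F^{k-j}[j] and N(alpha,1) = F^{alpha-1}[j]; the product of the D's is
   [k]! and the product of the N's is the numerator of wt(S(w)). *)

From HB Require Import structures.
From mathcomp Require Import all_boot all_order all_algebra all_fingroup.
From mathcomp Require Import zify.

Set Implicit Arguments.
Unset Strict Implicit.
Unset Printing Implicit Defensive.

Import GRing.Theory.

Section SeqIndex.
Variable T : eqType.

Lemma index_map_in (T' : eqType) (g : T -> T') (s : seq T) (y : T) :
  {in s &, injective g} -> y \in s -> index (g y) (map g s) = index y s.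
Proof.
elim: s => [|z s IH] //= g_inj y_zs.
case: (eqVneq z y) => [->|zy]; first by rewrite eqxx.
have y_s : y \in s by move: y_zs; rewrite inE eq_sym (negbTE zy).
rewrite IH //; last by apply: sub_in2 g_inj => c c_s; rewrite inE c_s orbT.
by rewrite ifN //; apply: contra zy => /eqP/g_inj ->; rewrite ?mem_head.
Qed.

Lemma index_take_mem (v : seq T) k b :
  b \in take k v -> index b v = index b (take k v).
Proof. by move=> b_v; rewrite -{1}(cat_take_drop k v) index_cat b_v. Qed.

Lemma index_drop_mem (v : seq T) k b : uniq v -> b \in drop k v ->
  index b v = (size (take k v) + index b (drop k v))%N.
Proof.
move=> v_uniq b_v; rewrite -{1}(cat_take_drop k v) index_cat ifN //.
have : uniq (take k v ++ drop k v) by rewrite cat_take_drop.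
by rewrite cat_uniq => /and3P[_ /hasPn take_drop_disj _]; apply: take_drop_disj.
Qed.

End SeqIndex.

(** * Increasing binary trees *)

Lemma foldr_minn_mem (x0 : nat) s : foldr minn x0 s \in x0 :: s.
Proof.
elim: s => [|y s IH] /=; first exact: mem_head.
rewrite /minn; case: ifP => _; first by rewrite !inE eqxx orbT.
by move: IH; rewrite !inE => /orP[->|->]; rewrite ?orbT.
Qed.

Lemma foldr_minn_leq (x0 : nat) s y : y \in x0 :: s -> foldr minn x0 s <= y.
Proof.
elim: s y => [|z s IH] y /=; first by rewrite inE => /eqP->.
rewrite in_cons => /predU1P[->|]; first exact: leq_trans (geq_minr _ _) (IH _ (mem_head _ _)).
rewrite in_cons => /predU1P[->|y_s]; first exact: geq_minl.
by apply: leq_trans (geq_minr _ _) (IH _ _); rewrite in_cons y_s orbT.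
Qed.

Definition min_letter (v : seq nat) : nat := if v is v1 :: _ then foldr minn v1 v else 0.

Lemma min_letter_mem (v : seq nat) : v != [::] -> min_letter v \in v.
Proof.
case: v => // v1 s _; rewrite /min_letter.
by case/predU1P: (foldr_minn_mem v1 (v1 :: s)) => [->|]; rewrite ?mem_head.
Qed.

Lemma min_letter_leq (v : seq nat) y : y \in v -> min_letter v <= y.
Proof. by case: v => // v1 s y_v; apply: foldr_minn_leq; rewrite in_cons y_v orbT. Qed.

Lemma index_min_letter (v : seq nat) : v != [::] -> index (min_letter v) v < size v.
Proof. by move=> /min_letter_mem; rewrite index_mem. Qed.

Lemma min_letter_map (g : nat -> nat) (v : seq nat) : v != [::] ->
  {in v &, {mono g : a b / a <= b}} -> min_letter (map g v) = g (min_letter v).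
Proof.
move=> v0 g_mono; have gv0 : map g v != [::] by rewrite -size_eq0 size_map size_eq0.
apply/eqP; rewrite eqn_leq min_letter_leq ?map_f ?min_letter_mem //=.
have /mapP[y y_v ->] := min_letter_mem gv0.
by rewrite g_mono ?min_letter_mem ?min_letter_leq.
Qed.

Lemma ibt_rec_cons f (v : seq nat) : v != [::] ->
  ibt_rec f.+1 v = Node (min_letter v) (ibt_rec f (take (index (min_letter v) v) v))
                                       (ibt_rec f (drop (index (min_letter v) v).+1 v)).
Proof. by case: v. Qed.

Lemma ibt_rec_fuel_eq f g (v : seq nat) : size v <= f -> size v <= g -> ibt_rec f v = ibt_rec g v.
Proof.
elim: f g v => [|f IH] [|g] [|v1 s] le_f le_g //; set v := v1 :: s in le_f le_g *.
have j_lt := index_min_letter (isT : v != [::]).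
rewrite !ibt_rec_cons //; congr Node; apply: IH; rewrite ?size_takel ?size_drop; lia.
Qed.

Lemma ibt_Node (v : seq nat) : v != [::] ->
  ibt v = Node (min_letter v) (ibt (take (index (min_letter v) v) v))
                              (ibt (drop (index (min_letter v) v).+1 v)).
Proof.
move=> v0; have j_lt := index_min_letter v0.
rewrite {1}/ibt -(prednK (leq_ltn_trans (leq0n _) j_lt)) ibt_rec_cons //.
by congr Node; apply: ibt_rec_fuel_eq; rewrite ?size_takel ?size_drop; lia.
Qed.

Lemma min_split_ind (P : seq nat -> Prop) :
  P [::] ->
  (forall v, v != [::] -> P (take (index (min_letter v) v) v) ->
     P (drop (index (min_letter v) v).+1 v) -> P v) ->
  forall v, P v.
Proof.
move=> P0 Psplit v; have [m] := ubnP (size v); elim: m v => // m IHm [|v1 s] // lt_vm.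
have j_lt := index_min_letter (isT : v1 :: s != [::]).
by apply: Psplit => //; apply: IHm; rewrite ?size_takel ?size_drop; lia.
Qed.

Lemma labels_ibt (v : seq nat) : labels (ibt v) = v.
Proof.
elim/min_split_ind: v => // v v0 IHl IHr.
rewrite ibt_Node //= IHl IHr; set j := index _ v.
by rewrite -[RHS](cat_take_drop j) (drop_nth 0 (index_min_letter v0)) nth_index ?min_letter_mem.
Qed.

Fixpoint relabel (g : nat -> nat) (t : btree) : btree :=
  if t is Node b L R then Node (g b) (relabel g L) (relabel g R) else Leaf.

Lemma labels_relabel g t : labels (relabel g t) = map g (labels t).
Proof. by elim: t => //= b L -> R ->; rewrite map_cat. Qed.

Lemma ibt_map (g : nat -> nat) (v : seq nat) :
  {in v &, {mono g : a b / a <= b}} -> ibt (map g v) = relabel g (ibt v).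
Proof.
elim/min_split_ind: v => // v v0 IHl IHr g_mono.
have g_inj : {in v &, injective g} := mono_inj_in leqnn anti_leq g_mono.
have gv0 : map g v != [::] by rewrite -size_eq0 size_map size_eq0.
rewrite (ibt_Node v0) (ibt_Node gv0) min_letter_map // index_map_in ?min_letter_mem //=.
rewrite -map_take -map_drop IHl ?IHr //; apply: sub_in2 g_mono => c; [exact: mem_drop|exact: mem_take].
Qed.

(** * Inverse words *)

Section CountTake.
Variables (P : pred nat) (s : seq nat).

Lemma index_filter y : y \in s -> P y -> index y (filter P s) = count P (take (index y s) s).
Proof.
elim: s => [|z s' IH] //= y_s Py.
case: (eqVneq z y) => [->|zy]; first by rewrite Py /= eqxx.
have {}y_s : y \in s' by move: y_s; rewrite inE eq_sym (negbTE zy).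
by case: ifP => Pz /=; rewrite ?(negbTE zy) IH // Pz.
Qed.

Lemma count_take_index_succ y : y \in s -> P y ->
  count P (take (index y s).+1 s) = (count P (take (index y s) s)).+1.
Proof.
move=> y_s Py; rewrite (take_nth 0) ?index_mem //.
by rewrite -cats1 count_cat nth_index //= Py addn1.
Qed.

Lemma count_take_leq p q : p <= q -> count P (take p s) <= count P (take q s).
Proof. by move=> le_pq; rewrite -(subnKC le_pq) takeD count_cat leq_addr. Qed.

Lemma count_take_ltn p q : p < q -> q <= size s -> P (nth 0 s q.-1) ->
  count P (take p s) < count P (take q s).
Proof.
move=> lt_pq q_le Pq; rewrite -(prednK (leq_ltn_trans (leq0n p) lt_pq)).
rewrite (take_nth 0) -?cats1 ?count_cat /= ?Pq ?addn1 ?ltnS ?count_take_leq //; lia.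
Qed.

Lemma count_take_mono (D : seq nat) :
  {in D, forall p, [&& 0 < p, p <= size s & P (nth 0 s p.-1)]} ->
  {in D &, {mono (fun p => count P (take p s)) : p q / p <= q}}.
Proof.
move=> D_ok p q p_D q_D /=; case: (leqP p q) => [/count_take_leq -> //|lt_qp].
apply/negbTE; rewrite -ltnNge; case/and3P: (D_ok p p_D) => _ p_le Pp.
exact: count_take_ltn.
Qed.

End CountTake.

Lemma count_leq_nth_sorted (S : seq nat) j : sorted gtn S -> j < size S ->
  count (fun c => nth 0 S j <= c) S = j.+1.
Proof.
elim: S j => [|y S IH] [|j] //= S_sorted j_lt.
  have /allP y_max := order_path_min (rev_trans ltn_trans) S_sorted.
  by rewrite leqnn (eq_in_count (a2 := pred0)) ?count_pred0 // => c /y_max /= /ltn_geF.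
rewrite IH ?(path_sorted S_sorted) //.
have /allP y_max := order_path_min (rev_trans ltn_trans) S_sorted.
by rewrite ltnW // y_max ?mem_nth.
Qed.

Lemma count_ltn_iota n a : 0 < a <= n + 1 -> count (fun c => c < a) (iota 1 n) = a.-1.
Proof.
move=> a_range; rewrite -size_filter.
rewrite (eq_filter (a2 := fun c => c < 1 + a.-1)) => [|c]; last by rewrite add1n prednK //; lia.
by rewrite filter_iota_ltn ?size_iota //; lia.
Qed.

Lemma root_count n (L R : seq nat) a :
  perm_eq (L ++ 1 :: R) (iota 1 n) -> a \in L ->
  ((count (fun c => c < a) R).+1 + (size L - count (fun c => a <= c) L) = a.-1).
Proof.
move=> LR_perm a_L.
have a_range : (0 < a <= n) by rewrite -mem_iota -(perm_mem LR_perm) mem_cat a_L.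
have a_gt1 : (1 < a).
  have := perm_uniq LR_perm; rewrite iota_uniq cat_uniq => /and3P[_ /hasPn one_notin _].
  suff : a != 1 by lia.
  by apply: contraNneq (one_notin _ (mem_head _ _)) => <-.
have := @count_ltn_iota n a; rewrite -(seq.permP LR_perm) count_cat /= a_gt1 /=.
have -> : count (fun c => a <= c) L = count (predC (fun c => c < a)) L.
  by apply: eq_count => c /=; rewrite leqNgt.
have := count_predC (fun c => c < a) L; lia.
Qed.

Definition inv_word (W : seq nat) : seq nat := [seq (index j W).+1 | j <- iota 1 (size W)].

Section PermutationWord.
Variables (n : nat) (W : seq nat).
Hypothesis W_perm : perm_eq W (iota 1 n).

Lemma word_mem q : (q \in W) = (0 < q <= n).
Proof. by rewrite (perm_mem W_perm) mem_iota; lia. Qed.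

Lemma word_uniq : uniq W.
Proof. by rewrite (perm_uniq W_perm) iota_uniq. Qed.

Lemma word_size : size W = n.
Proof. by rewrite (perm_size W_perm) size_iota. Qed.

Lemma inv_word_size : size (inv_word W) = n.
Proof. by rewrite size_map size_iota word_size. Qed.

Lemma inv_word_nth j : j < n -> nth 0 (inv_word W) j = (index j.+1 W).+1.
Proof. by move=> j_lt; rewrite (nth_map 0) ?nth_iota ?size_iota ?word_size. Qed.

Lemma inv_word_mem p : (p \in inv_word W) = (0 < p <= n).
Proof.
apply/mapP/idP => [[j j_W ->]|p_range].
  have : j \in W by rewrite word_mem; move: j_W; rewrite word_size mem_iota; lia.
  by rewrite -index_mem word_size.
exists (nth 0 W p.-1); first by rewrite word_size mem_iota -word_mem mem_nth // word_size; lia.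
by rewrite index_uniq ?word_uniq ?word_size; lia.
Qed.

Lemma inv_word_uniq : uniq (inv_word W).
Proof.
rewrite map_inj_in_uniq ?iota_uniq // => a b; rewrite word_size !mem_iota => a_range b_range [].
have [a_W b_W] : a \in W /\ b \in W by rewrite !word_mem; lia.
by move=> /(congr1 (nth 0 W)); rewrite !nth_index.
Qed.

Lemma inv_word_perm : perm_eq (inv_word W) (iota 1 n).
Proof.
by apply: uniq_perm; rewrite ?inv_word_uniq ?iota_uniq // => p; rewrite inv_word_mem mem_iota; lia.
Qed.

Lemma inv_word_index p : 0 < p <= n -> (index p (inv_word W)).+1 = nth 0 W p.-1.
Proof.
move=> p_range; set q := nth 0 W p.-1.
have q_range : 0 < q <= n by rewrite -word_mem mem_nth // word_size; lia.
have <- : nth 0 (inv_word W) q.-1 = p.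
  by rewrite inv_word_nth ?prednK ?index_uniq ?word_uniq ?word_size; lia.
by rewrite index_uniq ?inv_word_uniq ?inv_word_size; lia.
Qed.

End PermutationWord.

Section FirstLetterSplit.
Variables (k : nat) (W' : seq nat).
Local Notation W := (k.+1 :: W').

(* For [w = (k+1) W'], [low_word] and [high_word] are the paper's [a] and [\hat b], and
   [low_positions] is [S(w)] listed decreasingly; [low_rank p] is the rank of the position
   [p] among the positions of the letters [<= k] (similarly for [high_rank]). *)
Definition low_word := [seq v <- W | v <= k].
Definition high_word := [seq v - k.+1 | v <- W & k.+1 < v].
Definition low_rank p := count (fun v => v <= k) (take p W).
Definition high_rank p := count (fun v => k.+1 < v) (take p W).
Definition low_positions := rev [seq i.+1 | i <- iota 0 (size W) & nth 0 W i <= k].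

Lemma size_low_word_le : size low_word <= size W'.
Proof. by rewrite /low_word /= ltnn size_filter count_size. Qed.

Lemma size_high_word_le : size high_word <= size W'.
Proof. by rewrite /high_word /= ltnn size_map size_filter count_size. Qed.

Lemma zero_notin_low_word : 0 \notin W' -> 0 \notin low_word.
Proof. by rewrite mem_filter in_cons. Qed.

Lemma zero_notin_high_word : 0 \notin high_word.
Proof. by apply/mapP => -[v]; rewrite mem_filter => /andP[v_gt _]; lia. Qed.

Lemma low_positions_sorted : sorted gtn low_positions.
Proof.
rewrite rev_sorted sorted_map (sorted_filter (leT := ltn)) ?iota_ltn_sorted //.
exact: ltn_trans.
Qed.

End FirstLetterSplit.

Section FirstLetter.
Variables (n k : nat) (W' : seq nat).
Hypothesis W_perm : perm_eq (k.+1 :: W') (iota 1 n).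
Local Notation W := (k.+1 :: W').
Local Notation V := (inv_word W).

Lemma first_letter_lt : k < n.
Proof. by have := mem_head k.+1 W'; rewrite (word_mem W_perm); lia. Qed.

Lemma inv_word_first : nth 0 V k = 1.
Proof. by rewrite (inv_word_nth W_perm first_letter_lt) /= eqxx. Qed.

Lemma index_one_inv_word : index 1 V = k.
Proof.
by rewrite -inv_word_first index_uniq ?(inv_word_uniq W_perm) ?(inv_word_size W_perm) ?first_letter_lt.
Qed.

Lemma min_letter_inv_word : min_letter V = 1.
Proof.
have one_V : 1 \in V by rewrite (inv_word_mem W_perm); have := first_letter_lt; lia.
have V0 : V != [::] by apply: contraTneq one_V => ->.
by have := min_letter_leq one_V; have := min_letter_mem V0; rewrite (inv_word_mem W_perm); lia.
Qed.

Lemma ibt_inv_word : ibt V = Node 1 (ibt (take k V)) (ibt (drop k.+1 V)).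
Proof.
have V0 : V != [::] by rewrite -size_eq0 (inv_word_size W_perm); have := first_letter_lt; lia.
by rewrite ibt_Node // min_letter_inv_word index_one_inv_word.
Qed.

Lemma inv_word_split : V = take k V ++ 1 :: drop k.+1 V.
Proof.
by rewrite -inv_word_first -drop_nth ?cat_take_drop // (inv_word_size W_perm) first_letter_lt.
Qed.

Lemma take_inv_word : take k V = [seq (index j W).+1 | j <- iota 1 k].
Proof.
rewrite -map_take take_iota (word_size W_perm); congr (map _ (iota 1 _)).
by have := first_letter_lt; lia.
Qed.

Lemma drop_inv_word : drop k.+1 V = [seq (index (k.+1 + j) W).+1 | j <- iota 1 (n - k.+1)].
Proof.
by rewrite -map_drop drop_iota (word_size W_perm) addnC iotaDl -map_comp.
Qed.

Lemma low_word_perm : perm_eq (low_word k W') (iota 1 k).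
Proof.
apply: perm_trans (perm_filter _ W_perm) _.
rewrite (eq_filter (a2 := fun v => v < 1 + k)) => [|v]; last by rewrite add1n ltnS.
by rewrite filter_iota_ltn // ltnW // first_letter_lt.
Qed.

Lemma high_word_perm : perm_eq (high_word k W') (iota 1 (n - k.+1)).
Proof.
apply: perm_trans (perm_map _ (perm_filter _ W_perm)) _.
have k_lt := first_letter_lt.
rewrite -[n in iota 1 n](subnKC k_lt) iotaD filter_cat.
rewrite (eq_in_filter (a2 := pred0)) ?filter_pred0 => [|v]; last by rewrite mem_iota /=; lia.
rewrite (eq_in_filter (a2 := predT)) ?filter_predT => [|v]; last by rewrite mem_iota /=; lia.
rewrite [1 + k.+1]addnC iotaDl -map_comp map_id_in ?perm_refl // => v _ /=; lia.
Qed.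

Lemma low_word_size : size (low_word k W') = k.
Proof. by rewrite (perm_size low_word_perm) size_iota. Qed.

Lemma high_word_size : size (high_word k W') = n - k.+1.
Proof. by rewrite (perm_size high_word_perm) size_iota. Qed.

Lemma inv_low_word : inv_word (low_word k W') = map (low_rank k W') (take k V).
Proof.
rewrite take_inv_word /inv_word low_word_size -map_comp; apply/eq_in_map => j; rewrite mem_iota => j_range.
have j_W : j \in W by rewrite (word_mem W_perm); have := first_letter_lt; lia.
have j_low : j <= k by lia.
change ((index j (low_word k W')).+1 = (low_rank k W') (index j W).+1).
by rewrite /low_rank count_take_index_succ // index_filter.
Qed.

Lemma inv_high_word : inv_word (high_word k W') = map (high_rank k W') (drop k.+1 V).
Proof.
rewrite drop_inv_word /inv_word high_word_size -map_comp; apply/eq_in_map => j; rewrite mem_iota => j_range.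
change ((index j (high_word k W')).+1 = (high_rank k W') (index (k.+1 + j) W).+1).
have j_W : k.+1 + j \in W by rewrite (word_mem W_perm); lia.
have j_high : k.+1 < k.+1 + j by lia.
rewrite /high_rank count_take_index_succ // -index_filter // -[j in index j _](addKn k.+1).
congr S; apply: index_map_in; last by rewrite mem_filter j_high.
by move=> u v; rewrite !mem_filter => /andP[u_gt _] /andP[v_gt _] /=; lia.
Qed.

Lemma low_rank_mono : {in take k V &, {mono (low_rank k W') : p q / p <= q}}.
Proof.
apply: count_take_mono => p; rewrite take_inv_word => /mapP[j]; rewrite mem_iota => j_range ->.
have j_W : j \in W by rewrite (word_mem W_perm); have := first_letter_lt; lia.
apply/and3P; split=> //; first by rewrite index_mem.
by rewrite succnK nth_index //; lia.
Qed.

Lemma high_rank_mono : {in drop k.+1 V &, {mono (high_rank k W') : p q / p <= q}}.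
Proof.
apply: count_take_mono => p; rewrite drop_inv_word => /mapP[j]; rewrite mem_iota => j_range ->.
have j_W : k.+1 + j \in W by rewrite (word_mem W_perm); lia.
apply/and3P; split=> //; first by rewrite index_mem.
by rewrite succnK nth_index //; lia.
Qed.

Lemma low_positions_perm : perm_eq (take k V) (low_positions k W').
Proof.
apply: uniq_perm; first exact/take_uniq/(inv_word_uniq W_perm).
  rewrite rev_uniq map_inj_uniq ?filter_uniq ?iota_uniq //; exact: succn_inj.
move=> p; rewrite mem_rev; case: (boolP (0 < p <= n)) => p_range.
  have p_V : p \in V by rewrite (inv_word_mem W_perm).
  rewrite in_take // -ltnS (inv_word_index W_perm) //.
  have : nth 0 W p.-1 \in W by rewrite mem_nth // (word_size W_perm); lia.
  rewrite (word_mem W_perm) => q_range; apply/idP/mapP => [q_le|[i]].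
    by exists p.-1; [rewrite mem_filter mem_iota (word_size W_perm) /=; apply/andP; lia | lia].
  by rewrite mem_filter mem_iota => /andP[i_low _] p_eq; rewrite p_eq /= in q_range *; lia.
apply/idP/mapP => [/mem_take|[i]]; first by rewrite (inv_word_mem W_perm) (negbTE p_range).
by rewrite mem_filter mem_iota (word_size W_perm) => /andP[_ i_lt] p_eq; move: p_range; rewrite p_eq; lia.
Qed.

End FirstLetter.

Local Open Scope ring_scope.

(** * Tree products *)

Section IteratedFrobenius.
Variables (K : fieldType) (F : {rmorphism K -> K}).

Lemma Fp_is_nmod_morphism c : nmod_morphism (Fp F c).
Proof.
elim: c => [|c [IH0 IHD]] //.
by split=> [|a b]; rewrite /Fp /= -!/(Fp F c _) ?IH0 ?IHD (rmorph0, rmorphD).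
Qed.

Lemma Fp_is_monoid_morphism c : monoid_morphism (Fp F c).
Proof.
elim: c => [|c [IH1 IHM]] //.
by split=> [|a b]; rewrite /Fp /= -!/(Fp F c _) ?IH1 ?IHM (rmorph1, rmorphM).
Qed.

HB.instance Definition _ c :=
  GRing.isNmodMorphism.Build K K (Fp F c) (Fp_is_nmod_morphism c).
HB.instance Definition _ c :=
  GRing.isMonoidMorphism.Build K K (Fp F c) (Fp_is_monoid_morphism c).

Lemma FpD a b z : Fp F (a + b) z = Fp F a (Fp F b z).
Proof. exact: iterD. Qed.

Lemma FpC a b z : Fp F a (Fp F b z) = Fp F b (Fp F a z).
Proof. by rewrite -!FpD addnC. Qed.

Variable x : nat -> K.
Hypothesis Fx : forall i, F (x i) = x i.+1.

Lemma Fp_x c m : Fp F c (x m) = x (m + c).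
Proof. by elim: c => [|c IH]; rewrite ?addn0 // addnS -Fx -IH. Qed.

Lemma Fp_xp c m : (0 < m)%N -> Fp F c (xp x m) = xp x (m + c).
Proof. by move=> m_gt0; rewrite /xp Fp_x; congr x; lia. Qed.

End IteratedFrobenius.

Section TreeProduct.
Variables (K : fieldType) (x : nat -> K) (F : {rmorphism K -> K}).

(* [Dab], [Nab] and [tree_prod] with [wval w] replaced by an arbitrary [f]. *)
Definition Dfun (f : nat -> nat) (a b : nat) (L : btree) : K :=
  \sum_(1 <= i < (count (fun c => a <= c)%N (labels L)).+1) xp x (f b - i).

Definition Nfun (f : nat -> nat) (a b : nat) (L R : btree) : K :=
  Fp F (count (fun c => c < a)%N (labels R)).+1 (Dfun f a b L).

Fixpoint tprod (f : nat -> nat) (t : btree) : K :=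
  if t is Node b L R then
    (\prod_(a <- labels L) (Nfun f a b L R / Dfun f a b L)) * tprod f L * tprod f R
  else 1.

Lemma tree_prod_tprod n (w : 'S_n) t : tree_prod x F w t = tprod (wval w) t.
Proof. by elim: t => //= b L -> R ->. Qed.

Lemma eq_in_tprod f f' t : {in labels t, f =1 f'} -> tprod f t = tprod f' t.
Proof.
elim: t => //= b L IHL R IHR ff'.
rewrite IHL => [|c c_L]; last by apply: ff'; rewrite mem_cat c_L.
rewrite IHR => [|c c_R]; last by apply: ff'; rewrite mem_cat inE c_R !orbT.
by rewrite /Nfun /Dfun ff' // mem_cat mem_head orbT.
Qed.

Lemma tprod_relabel (g f f' : nat -> nat) t :
  {in labels t &, {mono g : a b / (a <= b)%N}} ->
  {in labels t, forall b, f' (g b) = f b} ->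
  tprod f' (relabel g t) = tprod f t.
Proof.
elim: t => //= b L IHL R IHR g_mono gf.
have sub_L : {subset labels L <= labels L ++ b :: labels R}.
  by move=> c c_L; rewrite mem_cat c_L.
have sub_R : {subset labels R <= labels L ++ b :: labels R}.
  by move=> c c_R; rewrite mem_cat inE c_R !orbT.
rewrite IHL ?IHR; try by [apply: sub_in2 g_mono | apply: sub_in1 gf].
congr (_ * _ * _); rewrite labels_relabel big_map; apply: eq_big_seq => a a_L.
rewrite /Nfun /Dfun !labels_relabel !count_map gf ?mem_cat ?mem_head ?orbT //.
have a_t := sub_L a a_L.
have -> : count (preim g (fun c => g a <= c)%N) (labels L) = count (fun c => a <= c)%N (labels L).
  by apply: eq_in_count => c /sub_L c_t /=; rewrite g_mono.
have -> : count (preim g (fun c => c < g a)%N) (labels R) = count (fun c => c < a)%N (labels R).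
  by apply: eq_in_count => c /sub_R c_t /=; rewrite [LHS]ltnNge [RHS]ltnNge g_mono.
by [].
Qed.

Fixpoint left_bounded (f : nat -> nat) (t : btree) : bool :=
  if t is Node b L R then
    [&& size (labels L) < f b, left_bounded f L & left_bounded f R]%N
  else true.

Lemma left_bounded_le f f' t :
  {in labels t, forall b, f b <= f' b}%N -> left_bounded f t -> left_bounded f' t.
Proof.
elim: t => //= b L IHL R IHR ff' /and3P[fb bL bR]; apply/and3P; split.
- by apply: leq_trans fb (ff' _ _); rewrite mem_cat mem_head orbT.
- by apply: IHL bL => c c_L; apply: ff'; rewrite mem_cat c_L.
- by apply: IHR bR => c c_R; apply: ff'; rewrite mem_cat inE c_R !orbT.
Qed.

Lemma left_bounded_ibt (v : seq nat) : uniq v -> left_bounded (fun b => (index b v).+1) (ibt v).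
Proof.
elim/min_split_ind: v => // v v0 IHl IHr v_uniq.
have j_lt := index_min_letter v0; rewrite ibt_Node //; apply/and3P; split.
- by rewrite labels_ibt size_takel ?(ltnW j_lt).
- apply: left_bounded_le (IHl (take_uniq _ v_uniq)) => c.
  by rewrite labels_ibt => /index_take_mem ->.
- apply: left_bounded_le (IHr (drop_uniq _ v_uniq)) => c.
  by rewrite labels_ibt => /(index_drop_mem v_uniq) ->; rewrite ltnS leq_addl.
Qed.

Hypothesis Fx : forall i, F (x i) = x i.+1.

Lemma tprod_shift f c t : left_bounded f t ->
  tprod (fun b => f b + c)%N t = Fp F c (tprod f t).
Proof.
elim: t => [|b L IHL R IHR /and3P[fb bL bR]] /=; first by rewrite rmorph1.
rewrite !rmorphM IHL // IHR // rmorph_prod; congr (_ * _ * _); apply: eq_bigr => a _.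
have shiftD : Dfun (fun b => f b + c)%N a b L = Fp F c (Dfun f a b L).
  rewrite /Dfun rmorph_sum /=; apply: eq_big_nat => i /andP[i_gt0 i_le].
  have cnt_le := count_size (fun c => a <= c)%N (labels L).
  by rewrite (Fp_xp Fx); [congr (xp x _) |]; lia.
by rewrite /Nfun shiftD fmorph_div FpC.
Qed.

(* The tree product of [T(v)] for [v = w^{-1}], where [w(b)] is the position of [b] in [v]. *)
Definition word_tprod (v : seq nat) : K := tprod (fun b => (index b v).+1) (ibt v).

Lemma word_tprod_map (g : nat -> nat) (v : seq nat) :
  {in v &, {mono g : a b / (a <= b)%N}} -> word_tprod (map g v) = word_tprod v.
Proof.
move=> g_mono; have g_inj : {in v &, injective g} := mono_inj_in leqnn anti_leq g_mono.
rewrite /word_tprod ibt_map // (tprod_relabel (f := fun b => (index b v).+1)) ?labels_ibt //.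
by move=> b b_v /=; rewrite index_map_in.
Qed.

Lemma word_tprod_take (v : seq nat) k :
  tprod (fun b => (index b v).+1) (ibt (take k v)) = word_tprod (take k v).
Proof. by apply: eq_in_tprod => b; rewrite labels_ibt => /index_take_mem ->. Qed.

Lemma word_tprod_drop (v : seq nat) k : uniq v -> (k <= size v)%N ->
  tprod (fun b => (index b v).+1) (ibt (drop k v)) = Fp F k (word_tprod (drop k v)).
Proof.
move=> v_uniq k_le; rewrite /word_tprod -tprod_shift; last exact/left_bounded_ibt/drop_uniq.
apply: eq_in_tprod => b; rewrite labels_ibt => /(index_drop_mem v_uniq) ->.
by rewrite size_takel // addSn addnC.
Qed.

Lemma tprod_Node f b L R : tprod f (Node b L R) =
  (\prod_(a <- labels L) (Nfun f a b L R / Dfun f a b L)) * tprod f L * tprod f R.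
Proof. by []. Qed.

Lemma sum_xp_rev k l : (l <= k)%N ->
  \sum_(1 <= i < l.+1) xp x (k.+1 - i) = Fp F (k - l) (brk x l).
Proof.
move=> l_le; rewrite /brk rmorph_sum /= big_nat_rev /=; apply: eq_big_nat => i /andP[i_gt0 i_le].
by rewrite (Fp_xp Fx); [congr (xp x _) |]; lia.
Qed.

Lemma root_factor f (tL tR : btree) n k S :
  perm_eq (labels tL ++ 1%N :: labels tR) (iota 1 n) -> size (labels tL) = k ->
  f 1%N = k.+1 -> perm_eq (labels tL) S -> sorted gtn S ->
  \prod_(a <- labels tL) (Nfun f a 1 tL tR / Dfun f a 1 tL) = wt_set x F S.
Proof.
move=> t_perm L_size f1 LS S_sorted.
have S_size : size S = k by rewrite -(perm_size LS).
have root_term (j : 'I_k) :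
    Nfun f (nth 0%N S j) 1 tL tR / Dfun f (nth 0%N S j) 1 tL =
    Fp F (nth 0%N S j).-1 (brk x j.+1) / Fp F (k - j.+1) (brk x j.+1).
  have j_lt : (j < size S)%N by rewrite S_size.
  have a_L : nth 0%N S j \in labels tL by rewrite (perm_mem LS) mem_nth.
  have cnt : count (fun c => nth 0%N S j <= c)%N (labels tL) = j.+1.
    by rewrite (seq.permP LS) count_leq_nth_sorted.
  rewrite /Nfun /Dfun cnt f1 sum_xp_rev // -FpD.
  by have := root_count t_perm a_L; rewrite cnt L_size => ->.
rewrite (perm_big _ LS) (big_nth 0%N) S_size big_mkord.
under eq_bigr => j _ do rewrite root_term.
rewrite big_split /= prodfV /wt_set S_size; congr (_ * _^-1).
rewrite /brk_fact (reindex_inj rev_ord_inj); apply: eq_bigr => j _ /=.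
by have j_lt := ltn_ord j; congr (Fp _ _ (brk _ _)); lia.
Qed.

End TreeProduct.

(** * Weights *)

Section Weights.
Variables (K : fieldType) (x : nat -> K) (F : {rmorphism K -> K}).

Lemma wt_rec_cons f k W' :
  wt_rec x F f.+1 (k.+1 :: W') = wt_set x F (low_positions k W') *
    wt_rec x F f (low_word k W') * Fp F k.+1 (wt_rec x F f (high_word k W')).
Proof. by []. Qed.

(* A first letter [0] would give [k = 0.-1 = 0] and stay in the low part, so the
   recursion would not shrink the word. *)
Lemma wt_rec_fuel_eq f g (u : seq nat) : 0%N \notin u ->
  (size u <= f)%N -> (size u <= g)%N -> wt_rec x F f u = wt_rec x F g u.
Proof.
elim: f g u => [|f IH] [|g] [|w1 W'] u0 le_f le_g //.
case: w1 u0 le_f le_g => [|k]; first by rewrite mem_head.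
rewrite in_cons negb_or => /andP[_ W'0]; rewrite [size _]/= !ltnS => le_f le_g.
have := size_low_word_le k W'; have := size_high_word_le k W'.
rewrite !wt_rec_cons => high_le low_le; congr (_ * _ * Fp _ _ _); apply: IH;
  rewrite ?zero_notin_low_word ?zero_notin_high_word //; lia.
Qed.

Lemma wt_rec_word f (u : seq nat) : 0%N \notin u -> (size u <= f)%N -> wt_rec x F f u = wt_word x F u.
Proof. by move=> u0 le_f; apply: wt_rec_fuel_eq. Qed.

Lemma wt_word_cons k W' : 0%N \notin W' ->
  wt_word x F (k.+1 :: W') = wt_set x F (low_positions k W') *
    wt_word x F (low_word k W') * Fp F k.+1 (wt_word x F (high_word k W')).
Proof.
move=> W'0; rewrite /wt_word [size _]/= wt_rec_cons.
by rewrite !wt_rec_word ?zero_notin_low_word ?zero_notin_high_word ?size_low_word_le ?size_high_word_le.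
Qed.

Hypothesis Fx : forall i, F (x i) = x i.+1.

Lemma word_tprod_inv_word n k W' : perm_eq (k.+1 :: W') (iota 1 n) ->
  word_tprod x F (inv_word (k.+1 :: W')) = wt_set x F (low_positions k W') *
    word_tprod x F (take k (inv_word (k.+1 :: W'))) *
    Fp F k.+1 (word_tprod x F (drop k.+1 (inv_word (k.+1 :: W')))).
Proof.
move=> W_perm; set V := inv_word _; have k_lt := first_letter_lt W_perm.
rewrite {1}/word_tprod (ibt_inv_word W_perm) tprod_Node word_tprod_take.
rewrite word_tprod_drop ?(inv_word_uniq W_perm) ?(inv_word_size W_perm) //.
congr (_ * _ * _); apply: (root_factor Fx (n := n)); rewrite ?labels_ibt.
- by rewrite -(inv_word_split W_perm) (inv_word_perm W_perm).
- by rewrite size_takel ?(inv_word_size W_perm) // ltnW.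
- by rewrite /V (index_one_inv_word W_perm).
- exact: (low_positions_perm W_perm).
- exact: low_positions_sorted.
Qed.

Theorem wt_word_inv_word n (W : seq nat) : perm_eq W (iota 1 n) ->
  wt_word x F W = word_tprod x F (inv_word W).
Proof.
elim/ltn_ind: n W => n IH [|[|k] W'] W_perm //.
  by have := mem_head 0%N W'; rewrite (word_mem W_perm).
have k_lt := first_letter_lt W_perm.
have : 0%N \notin k.+1 :: W' by rewrite (word_mem W_perm).
rewrite in_cons negb_or => /andP[_ W'0].
rewrite wt_word_cons // (word_tprod_inv_word W_perm).
rewrite (IH k k_lt _ (low_word_perm W_perm)) (inv_low_word W_perm) word_tprod_map.
  have high_lt : (n - k.+1 < n)%N by lia.
  rewrite (IH _ high_lt _ (high_word_perm W_perm)) (inv_high_word W_perm) word_tprod_map //.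
  exact: high_rank_mono W_perm.
exact: low_rank_mono W_perm.
Qed.

End Weights.

Lemma iota1_enum n : iota 1 n = [seq (val i).+1 | i <- enum 'I_n].
Proof. by rewrite -[1%N]/(1 + 0)%N iotaDl -val_enum_ord -map_comp. Qed.

Lemma oneline_perm n (w : 'S_n) : perm_eq (oneline w) (iota 1 n).
Proof.
rewrite iota1_enum /oneline (map_comp (fun i : 'I_n => (val i).+1) w).
apply/seq.perm_map/uniq_perm.
- by rewrite map_inj_uniq ?enum_uniq //; exact: perm_inj.
- exact: enum_uniq.
by move=> i; rewrite mem_enum; apply/mapP; exists (w^-1 i)%g; rewrite ?mem_enum ?permKV.
Qed.

Lemma inv_word_oneline n (w : 'S_n) : inv_word (oneline w) = oneline_inv w.
Proof.
rewrite /oneline_inv /inv_word (word_size (oneline_perm w)) iota1_enum -map_comp.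
apply: eq_map => i /=; congr S.
have -> : (val i).+1 = (fun o : 'I_n => (w o).+1) ((w^-1)%g i) by rewrite /= permKV.
by rewrite index_map ?index_enum_ord // => a b [] /val_inj /perm_inj.
Qed.

Theorem proposition6p3 (K : fieldType) (x : nat -> K) (F : {rmorphism K -> K}) :
  alg_indep x ->
  (forall i : nat, F (x i) = x i.+1) ->
  forall (n : nat) (w : 'S_n),
    wt_perm x F w = tree_prod x F w (ibt (oneline_inv w)).
Proof.
move=> _ Fx n w; have w_perm := oneline_perm w.
rewrite /wt_perm (wt_word_inv_word Fx w_perm) -inv_word_oneline tree_prod_tprod /word_tprod.
apply: eq_in_tprod => b; rewrite labels_ibt (inv_word_mem w_perm) => b_range.
by rewrite (inv_word_index w_perm b_range).
Qed.
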